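(* Let $H$ be a connected bipartite graph on $h$ vertices. If $\mathrm{ex}(n,H)=\Omega(n^{1+\alpha})$ for some $\alpha\in(0,1)$, then for all integers $n\ge s\ge h$ we have $\mathrm{ex}^*(n,H,s)=\Omega_h(s^{1-\alpha}n^{1+\alpha})$.
   Context: $\mathrm{ex}(n,H)$ is the maximum number of edges in an $n$-vertex graph containing no copy of $H$ as a subgraph. For a positive integer $s$, $\mathrm{ex}^*(n,H,s)$ is the maximum number of edges in an $n$-vertex graph containing no copy of $K_{s,s}$ as a subgraph and no induced copy of $H$. The notation $\Omega_h(\cdot)$ means the implied positive constant may depend on $h$ (and on $H$), but not on $n$ or $s$. *)

From mathcomp Require Import all_boot.
Set Implicit Arguments. Unset Strict Implicit. Unset Printing Implicit Defensive.

Definition simple_graph (T : finType) (E : {set {set T}}) : bool :=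
  [forall e in E, #|e| == 2].

Definition adj (T : finType) (E : {set {set T}}) (x y : T) : bool :=
  [set x; y] \in E.

Definition connected_graph (T : finType) (E : {set {set T}}) : Prop :=
  forall x y : T, connect (adj E) x y.

Definition bipartite_graph (T : finType) (E : {set {set T}}) : Prop :=
  exists c : T -> bool, forall x y : T, adj E x y -> c x != c y.

Definition has_copy (V : finType) (EH : {set {set V}}) n (E : {set {set 'I_n}}) : bool :=
  [exists f : {ffun V -> 'I_n}, injectiveb f &&
     [forall x, forall y, adj EH x y ==> adj E (f x) (f y)]].

Definition has_induced_copy (V : finType) (EH : {set {set V}}) n (E : {set {set 'I_n}}) : bool :=
  [exists f : {ffun V -> 'I_n}, injectiveb f &&
     [forall x, forall y, (x != y) ==> (adj EH x y == adj E (f x) (f y))]].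

Definition has_Kss n (E : {set {set 'I_n}}) (s : nat) : bool :=
  [exists A : {set 'I_n}, exists B : {set 'I_n},
     [&& #|A| == s, #|B| == s, [disjoint A & B] &
         [forall a in A, forall b in B, adj E a b]]].

Definition ex (n : nat) (V : finType) (EH : {set {set V}}) : nat :=
  \max_(E : {set {set 'I_n}} | simple_graph E && ~~ has_copy EH E) #|E|.

Definition exstar (n : nat) (V : finType) (EH : {set {set V}}) (s : nat) : nat :=
  \max_(E : {set {set 'I_n}} |
          [&& simple_graph E, ~~ has_Kss E s & ~~ has_induced_copy EH E]) #|E|.

(* Blow up an extremal H-free graph G on m vertices: each vertex becomes a clique
   of size t and each edge a complete bipartite graph K_{t,t}, giving t^2 e(G) edges.
   An induced copy of H cannot put two vertices x, y into one clique: they would be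
   twins, and a neighbour of {x, y} outside it (H is connected with h >= 3 vertices)
   would close a triangle in the bipartite H.  So the copy projects to a copy of H in G.
   A K_{s,s} with s >= 2ht projects onto two sets of at least 2h cliques, which span a
   K_{h,h}, hence a copy of H, in G; for t = 1 the projections are disjoint and s >= h
   suffices.  With t ~ s/(2h) and m = n/t this gives
   ex*(n,H,s) >= t^2 ex(m,H) >= c t^2 (n/t)^(1+alpha) ~ c s^(1-alpha) n^(1+alpha),
   once the eventual bound on ex(m,H) is extended to all m >= 2 using ex(m,H) >= 1.
   For h <= 2 the hypothesis is void, as then ex(n,H) = 0. *)

From mathcomp Require Import all_boot zify.
From Stdlib Require Import Reals Lra.
Set Implicit Arguments. Unset Strict Implicit.

Lemma subset_of_card (T : finType) (A : {set T}) k :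
  k <= #|A| -> exists2 B : {set T}, B \subset A & #|B| = k.
Proof.
move=> kA; exists [set enum_val (widen_ord kA i) | i : 'I_k].
  by apply/subsetP => _ /imsetP[i _ ->]; apply: enum_valP.
rewrite card_imset ?card_ord // => i j /enum_val_inj /(congr1 val) ij.
exact: val_inj.
Qed.

Lemma card_le_imset_fibres (T U : finType) (f : T -> U) (A : {set T}) t :
  (forall u, #|[set x in A | f x == u]| <= t) -> #|A| <= #|f @: A| * t.
Proof.
move=> fibre_le; rewrite -sum1_card (partition_big_imset f) /= -sum_nat_const.
apply: leq_sum => u _; rewrite sum1dep_card; exact: fibre_le.
Qed.

Section Graphs.
Variable T : finType.
Implicit Types (E : {set {set T}}) (x y : T).

Lemma adjC E x y : adj E x y = adj E y x.
Proof. by rewrite /adj setUC. Qed.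

Lemma simple_adj_neq E x y : simple_graph E -> adj E x y -> x != y.
Proof.
move=> /forall_inP simE /simE; apply: contraTneq => ->.
by rewrite setUid cards1.
Qed.

Lemma set2_eq_cases x y x' y' :
  [set x; y] = [set x'; y'] -> (x = x' /\ y = y') \/ (x = y' /\ y = x').
Proof.
move=> xy_eq.
have : x \in [set x'; y'] by rewrite -xy_eq set21.
have : y \in [set x'; y'] by rewrite -xy_eq set22.
have : x' \in [set x; y] by rewrite xy_eq set21.
have : y' \in [set x; y] by rewrite xy_eq set22.
rewrite !inE => /orP[]/eqP-> /orP[]/eqP-> /orP[]/eqP ? /orP[]/eqP ?; subst; tauto.
Qed.

Lemma connect_cross (e : rel T) (S : pred T) x y :
  connect e x y -> S x -> ~~ S y -> exists u v, [/\ S u, ~~ S v & e u v].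
Proof.
case/connectP=> p + ->; elim: p x => [|z p IHp] x /=; first by move=> _ ->.
case/andP=> exz pz Sx; case Sz: (S z); first exact: IHp.
by exists x, z; rewrite Sz.
Qed.

End Graphs.

Lemma card_ordered_edges_ge k (E : {set {set 'I_k}}) : simple_graph E ->
  #|E| <= #|[set q : 'I_k * 'I_k | (q.1 < q.2) && adj E q.1 q.2]|.
Proof.
move=> /forall_inP simE; set S := [set q | _].
have imS : #|[set [set q.1; q.2] | q in S]| <= #|S| by apply: leq_imset_card.
apply: leq_trans imS; apply: subset_leq_card; apply/subsetP => e eE.
have /cards2P[x [y [xy e_xy]]] := simE e eE; subst e.
have [lt|gt|eq] := ltngtP x y.
- by apply/imsetP; exists (x, y); rewrite // /S inE lt /adj eE.
- by apply/imsetP; exists (y, x); rewrite /= 1?setUC // /S inE gt /adj setUC eE.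
- by move: xy; rewrite (val_inj eq) eqxx.
Qed.

Section PatternGraph.
Variables (V : finType) (EH : {set {set V}}).

Lemma connected_neighbor :
  connected_graph EH -> 1 < #|V| -> forall x, exists y, adj EH x y.
Proof.
move=> connH V_gt1 x.
have /card_gt0P[w] : 0 < #|[set~ x]| by rewrite cardsC1; lia.
rewrite !inE => wx.
have [_ [y [/eqP-> _ xy]]] := connect_cross (S := pred1 x) (connH x w) (eqxx x) wx.
by exists y.
Qed.

Lemma connected_pair_neighbor : connected_graph EH -> 2 < #|V| ->
  forall x y, exists z, [/\ z != x, z != y & adj EH x z || adj EH y z].
Proof.
move=> connH V_gt2 x y.
have /card_gt0P[w] : 0 < #|~: [set x; y]|.
  by have := cardsC [set x; y]; rewrite cards2; lia.
rewrite !inE negb_or => /andP[wx wy].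
have wxy : w \notin [set x; y] by rewrite !inE negb_or wx wy.
have [u [z [uxy]]] := connect_cross (S := mem [set x; y]) (connH x w) (set21 x y) wxy.
rewrite !inE negb_or => /andP[zx zy] uz.
by exists z; split=> //; move: uxy; rewrite !inE => /orP[]/eqP<-; rewrite uz ?orbT.
Qed.

Lemma bipartite_triangle_free x y z :
  bipartite_graph EH -> adj EH x y -> adj EH y z -> adj EH z x -> False.
Proof. by case=> c col /col + /col + /col; case: (c x) (c y) (c z) => [] [] []. Qed.

Lemma bipartite_copy_in_biclique n (E : {set {set 'I_n}}) (X Y : {set 'I_n}) :
  bipartite_graph EH -> [disjoint X & Y] -> #|V| <= #|X| -> #|V| <= #|Y| ->
  {in X & Y, forall u v, adj E u v} -> has_copy EH E.
Proof.
case=> c col disXY VX VY XY.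
pose fX v := enum_val (widen_ord VX (enum_rank v)).
pose fY v := enum_val (widen_ord VY (enum_rank v)).
have fX_inj : injective fX.
  by move=> v w /enum_val_inj/(congr1 val)/=/val_inj/enum_rank_inj.
have fY_inj : injective fY.
  by move=> v w /enum_val_inj/(congr1 val)/=/val_inj/enum_rank_inj.
have fXY v w : fX v != fY w.
  have := enum_valP (widen_ord VX (enum_rank v)); rewrite -/(fX v).
  by apply: contraTneq => ->; rewrite (disjointFl disXY) ?enum_valP.
pose f v := if c v then fX v else fY v.
apply/existsP; exists [ffun v => f v]; apply/andP; split.
  apply/injectiveP => v w; rewrite !ffunE /f.
  case: (c v); case: (c w) => fvw.
  - exact: fX_inj.
  - by move: (fXY v w); rewrite fvw eqxx.
  - by move: (fXY w v); rewrite fvw eqxx.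
  - exact: fY_inj.
apply/'forall_forallP => v w; apply/implyP => vw; rewrite !ffunE /f.
have := col v w vw; case: (c v); case: (c w) => // _.
  by apply: XY; apply: enum_valP.
by rewrite adjC; apply: XY; apply: enum_valP.
Qed.

Lemma bipartite_copy_in_crossing n (E : {set {set 'I_n}}) (X Y : {set 'I_n}) :
  bipartite_graph EH -> 2 * #|V| <= #|X| -> #|V| <= #|Y| ->
  (forall u v, u \in X -> v \in Y -> u != v -> adj E u v) -> has_copy EH E.
Proof.
move=> bipH VX VY XY.
have [Y' Y'Y cardY'] := subset_of_card VY.
apply: (bipartite_copy_in_biclique (X := X :\: Y') (Y := Y')) => //.
- by rewrite -setI_eq0 setIDAC setDIl setDv setI0.
- by rewrite cardsD; have := subset_leq_card (subsetIr X Y'); lia.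
- by rewrite cardY'.
- move=> u v /setDP[uX uY'] vY'; apply: XY => //; first exact: subsetP Y'Y v vY'.
  by apply: contraNneq uY' => ->.
Qed.

End PatternGraph.

Section BlowUp.
Variables (n m : nat) (G : {set {set 'I_m}}) (D : {set 'I_n}) (p : 'I_n -> 'I_m).

(* The fibre of [u] under [p] inside [D] is the clique replacing the vertex [u]
   of [G]; vertices outside [D] are isolated padding. *)
Definition blowup_rel (i j : 'I_n) : bool :=
  [&& i != j, i \in D, j \in D & (p i == p j) || adj G (p i) (p j)].

Definition blowup : {set {set 'I_n}} :=
  [set [set i; j] | i : 'I_n, j : 'I_n in blowup_rel i].

Lemma blowup_relC i j : blowup_rel i j = blowup_rel j i.
Proof.
rewrite /blowup_rel eq_sym adjC (eq_sym (p i)).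
by case: (i \in D); case: (j \in D); rewrite ?andbF.
Qed.

Lemma adj_blowup i j : adj blowup i j = blowup_rel i j.
Proof.
apply/imset2P/idP => [[i' j' _]|rel].
  rewrite [_ \in _]/= => rel' /set2_eq_cases[[-> ->]|[-> ->]] //.
  by rewrite blowup_relC.
by exists i j.
Qed.

Lemma blowup_simple : simple_graph blowup.
Proof.
apply/forall_inP => e /imset2P[i j _]; rewrite [_ \in _]/= => /andP[ij _] ->.
by rewrite cards2 ij.
Qed.

Lemma blowup_rel_twin i j k : p i = p j -> i \in D -> j \in D -> k != i -> k != j ->
  blowup_rel i k = blowup_rel j k.
Proof.
move=> pij iD jD ki kj.
by rewrite /blowup_rel pij iD jD (eq_sym i) (eq_sym j) ki kj.
Qed.

Lemma blowup_card t (emb : 'I_m * 'I_t -> 'I_n) :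
  simple_graph G -> injective emb -> (forall q, emb q \in D) ->
  (forall q, p (emb q) = q.1) -> #|G| * (t * t) <= #|blowup|.
Proof.
move=> simG emb_inj embD embK.
pose S := [set q : 'I_m * 'I_m | (q.1 < q.2) && adj G q.1 q.2].
pose phi (q : ('I_m * 'I_m) * ('I_t * 'I_t)) :=
  [set emb (q.1.1, q.2.1); emb (q.1.2, q.2.2)].
have phi_inj : {in setX S setT &, injective phi}.
  move=> [[u v] [a b]] [[u' v'] [a' b']].
  rewrite /S !inE /= !andbT => /andP[uv _] /andP[uv' _].
  case/set2_eq_cases => -[/emb_inj[e1 e2] /emb_inj[e3 e4]]; subst => //.
  by have := ltn_trans uv uv'; rewrite ltnn.
apply: (@leq_trans #|phi @: setX S setT|).
  rewrite card_in_imset // cardsX cardsT card_prod card_ord.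
  by rewrite leq_mul2r card_ordered_edges_ge ?orbT.
apply: subset_leq_card; apply/subsetP => e /imsetP[[[u v] [a b]]].
rewrite /S !inE /= andbT => /andP[uv Guv] ->.
change (adj blowup (emb (u, a)) (emb (v, b))).
rewrite adj_blowup /blowup_rel !embD !embK /= Guv orbT !andbT.
by apply: contraTneq uv => /(congr1 p); rewrite !embK /= => ->; rewrite ltnn.
Qed.

Section BipartitePattern.
Variables (V : finType) (EH : {set {set V}}).
Hypothesis bipH : bipartite_graph EH.

Section BlowupBiclique.
Variables (s t : nat) (A B : {set 'I_n}).
Hypothesis Vs : #|V| <= s.
Hypothesis fibre_le : forall u, #|[set i in D | p i == u]| <= t.
Hypotheses (cardA : #|A| = s) (cardB : #|B| = s) (disAB : [disjoint A & B]).
Hypothesis AB : forall a b, a \in A -> b \in B -> blowup_rel a b.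

Lemma biclique_in_support : A \subset D /\ B \subset D.
Proof.
split; apply/subsetP.
  move=> a aA; have /card_gt0P[b bB] : 0 < #|B|.
    by rewrite cardB -cardA; apply/card_gt0P; exists a.
  by case/and4P: (AB aA bB).
move=> b bB; have /card_gt0P[a aA] : 0 < #|A|.
  by rewrite cardA -cardB; apply/card_gt0P; exists b.
by case/and4P: (AB aA bB).
Qed.

Lemma card_biclique_image (X : {set 'I_n}) : X \subset D -> #|X| <= #|p @: X| * t.
Proof.
move=> XD; apply: card_le_imset_fibres => u; apply: leq_trans (fibre_le u).
apply: subset_leq_card; apply/subsetP => i; rewrite !inE => /andP[iX ->].
by rewrite (subsetP XD).
Qed.

Lemma biclique_image_adj u v : u \in p @: A -> v \in p @: B -> u != v -> adj G u v.
Proof.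
move=> /imsetP[a aA ->] /imsetP[b bB ->] /negbTE pab.
by case/and4P: (AB aA bB) => _ _ _; rewrite pab.
Qed.

Lemma biclique_copy_of_injective : t = 1 -> has_copy EH G.
Proof.
move=> t1; have [AD BD] := biclique_in_support.
have p_inj : {in D &, injective p}.
  move=> i j iD jD pij; have := fibre_le (p i); rewrite t1 => /card_le1_eqP.
  by apply; rewrite !inE ?iD ?jD pij eqxx.
have disAB_image : [disjoint p @: A & p @: B].
  apply/pred0P => u /=; apply/andP => -[/imsetP[a aA ->] /imsetP[b bB pab]].
  have ab := p_inj a b (subsetP AD a aA) (subsetP BD b bB) pab; subst b.
  by rewrite (disjointFr disAB aA) in bB.
apply: (bipartite_copy_in_biclique bipH disAB_image).
- by have := card_biclique_image AD; rewrite cardA t1 muln1; exact: leq_trans Vs.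
- by have := card_biclique_image BD; rewrite cardB t1 muln1; exact: leq_trans Vs.
- move=> u v uA vB; apply: biclique_image_adj => //.
  by apply: contraTneq vB => <-; rewrite (disjointFr disAB_image uA).
Qed.

Lemma biclique_copy_of_large : 2 * #|V| * t <= s -> has_copy EH G.
Proof.
move=> st; have [AD BD] := biclique_in_support.
have image_large (X : {set 'I_n}) : X \subset D -> #|X| = s -> 2 * #|V| <= #|p @: X|.
  move=> XD cardX; have := card_biclique_image XD; rewrite cardX.
  have [t0|t_pos] := posnP t.
    by rewrite t0 muln0 leqn0 => /eqP s0; move: Vs; rewrite s0 leqn0 => /eqP ->.
  by move=> s_le; rewrite -(leq_pmul2r t_pos); exact: leq_trans st s_le.
apply: (bipartite_copy_in_crossing bipH (image_large A AD cardA)).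
- exact: leq_trans (leq_pmull _ (isT : 0 < 2)) (image_large B BD cardB).
- exact: biclique_image_adj.
Qed.

End BlowupBiclique.

Lemma blowup_Kss_free s t : ~~ has_copy EH G ->
  #|V| <= s -> (forall u, #|[set i in D | p i == u]| <= t) ->
  t = 1 \/ 2 * #|V| * t <= s -> ~~ has_Kss blowup s.
Proof.
move=> G_free Vs fibre_le t_cases; apply/negP.
case/existsP=> A /existsP[B /and4P[/eqP cardA /eqP cardB disAB /forall_inP AB]].
have {}AB a b : a \in A -> b \in B -> blowup_rel a b.
  by move=> aA bB; rewrite -adj_blowup; exact: (forall_inP (AB a aA)).
apply: (negP G_free); case: t_cases.
  exact: biclique_copy_of_injective Vs fibre_le cardA cardB disAB AB.
exact: biclique_copy_of_large Vs fibre_le cardA cardB AB.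
Qed.

Lemma blowup_induced_free : simple_graph EH -> connected_graph EH -> 2 < #|V| ->
  ~~ has_copy EH G -> ~~ has_induced_copy EH blowup.
Proof.
move=> simH connH V_gt2 G_free.
apply/negP => /existsP[f /andP[/injectiveP f_inj /'forall_forallP f_ind]].
have relH x y : x != y -> adj EH x y = blowup_rel (f x) (f y).
  by move=> xy; rewrite -adj_blowup; apply/eqP/(implyP (f_ind x y)).
have fD x : f x \in D.
  have [y xy] := connected_neighbor connH (ltnW V_gt2) x.
  by move: (xy); rewrite relH ?(simple_adj_neq simH xy) // => /and4P[].
have f_neq x y : x != y -> f x != f y by apply: contra => /eqP/f_inj->.
have pf_inj : injective (p \o f).
  move=> x y /= pxy; apply: contraTeq isT => xy.
  have [z [zx zy xz_or_yz]] := connected_pair_neighbor connH V_gt2 x y.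
  have twin : adj EH x z = adj EH y z.
    rewrite !relH 1?eq_sym //.
    by rewrite (blowup_rel_twin pxy) ?fD ?f_neq.
  have Hxy : adj EH x y by rewrite relH // /blowup_rel f_neq // !fD pxy eqxx.
  have Hxz : adj EH x z by case/orP: xz_or_yz; rewrite ?twin.
  have Hyz : adj EH y z by rewrite -twin.
  by case: (bipartite_triangle_free bipH Hxy Hyz _); rewrite adjC.
apply: (negP G_free); apply/existsP; exists [ffun x => p (f x)]; apply/andP; split.
  by apply/injectiveP => x y; rewrite !ffunE => /pf_inj.
apply/'forall_forallP => x y; apply/implyP => Hxy; rewrite !ffunE.
have xy := simple_adj_neq simH Hxy.
move: Hxy; rewrite relH // => /and4P[_ _ _ /orP[/eqP pxy|//]].
by rewrite (pf_inj x y pxy) eqxx in xy.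
Qed.

End BipartitePattern.

End BlowUp.

Section ExtremalNumbers.
Variables (V : finType) (EH : {set {set V}}).

Lemma set0_free n : connected_graph EH -> 1 < #|V| ->
  ~~ has_copy EH (set0 : {set {set 'I_n}}).
Proof.
move=> connH V_gt1; apply/existsP => -[f /andP[_ /'forall_forallP f_hom]].
have /card_gt0P[x _] : 0 < #|V| by apply: ltnW.
have [y xy] := connected_neighbor connH V_gt1 x.
by have := implyP (f_hom x y) xy; rewrite /adj inE.
Qed.

Lemma single_edge_free k : connected_graph EH -> 2 < #|V| ->
  ~~ has_copy EH [set [set (ord0 : 'I_k.+2); ord_max]].
Proof.
move=> connH V_gt2.
apply/existsP => -[f /andP[/injectiveP f_inj /'forall_forallP f_hom]].
have f_edge x : f x \in [set ord0; ord_max].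
  have [y xy] := connected_neighbor connH (ltnW V_gt2) x.
  by have := implyP (f_hom x y) xy; rewrite /adj inE => /eqP <-; rewrite set21.
have f_image : f @: [set: V] \subset [set ord0; ord_max].
  by apply/subsetP => _ /imsetP[x _ ->]; apply: f_edge.
by have := subset_leq_card f_image; rewrite card_imset // cardsT cards2; lia.
Qed.

Lemma ex_gt0 k : connected_graph EH -> 2 < #|V| -> 0 < ex k.+2 EH.
Proof.
move=> connH V_gt2; pose E1 : {set {set 'I_k.+2}} := [set [set ord0; ord_max]].
have simE1 : simple_graph E1 by apply/forall_inP => e /set1P ->; rewrite cards2.
pose P (E : {set {set 'I_k.+2}}) := simple_graph E && ~~ has_copy EH E.
have := @leq_bigmax_cond _ P (fun E => #|E|) E1.
by rewrite /P simE1 single_edge_free // cards1; apply.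
Qed.

Lemma ex_small n : simple_graph EH -> #|V| <= 2 -> ex n EH = 0.
Proof.
move=> simH V_le2; apply/eqP; rewrite -leqn0; apply/bigmax_leqP => E /andP[simE E_free].
rewrite leqn0 cards_eq0; apply: contraR E_free => /set0Pn[e eE].
have /cards2P[a [b [ab e_ab]]] := forall_inP simE e eE; subst e.
pose r (v : V) : nat := enum_rank v.
have r_lt2 v : r v < 2 := leq_trans (ltn_ord (enum_rank v)) V_le2.
pose f v := if r v == 0 then a else b.
have f_inj : injective f.
  move=> v w; have := r_lt2 v; have := r_lt2 w; rewrite /f.
  case: eqP => [w0|w0]; case: eqP => [v0|v0] w2 v2 fvw.
  - by apply/enum_rank_inj/ord_inj; rewrite -/(r v) -/(r w) v0 w0.
  - by rewrite fvw eqxx in ab.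
  - by rewrite fvw eqxx in ab.
  - by apply/enum_rank_inj/ord_inj; rewrite -/(r v) -/(r w); lia.
apply/existsP; exists [ffun v => f v]; apply/andP; split.
  by apply/injectiveP => v w; rewrite !ffunE => /f_inj.
apply/'forall_forallP => x y; apply/implyP => Hxy; rewrite !ffunE.
have : f x != f y by rewrite (inj_eq f_inj) (simple_adj_neq simH Hxy).
by rewrite /f; do 2 case: ifP => _; rewrite ?eqxx // adjC => _.
Qed.

End ExtremalNumbers.

Lemma block_vertex_lt m t (q : 'I_m * 'I_t) : q.1 * t + q.2 < m * t.
Proof. by case: q => [[u ?] [a ?]] /=; nia. Qed.

Section Blocks.
Variables (n k t : nat).
Hypothesis kt_le_n : k.+1 * t <= n.

(* Only meaningful on [block_support]; elsewhere [inord] returns a junk block. *)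
Definition block (i : 'I_n) : 'I_k.+1 := inord (i %/ t).

Definition block_support : {set 'I_n} := [set i : 'I_n | i < k.+1 * t].

Definition block_vertex (q : 'I_k.+1 * 'I_t) : 'I_n :=
  Ordinal (leq_trans (block_vertex_lt q) kt_le_n).

Lemma block_vertexK q : block (block_vertex q) = q.1.
Proof.
case: q => u a; have t_pos : 0 < t := leq_ltn_trans (leq0n a) (ltn_ord a).
by rewrite /block /= divnMDl // divn_small // addn0 inord_val.
Qed.

Lemma block_vertex_inj : injective block_vertex.
Proof.
move=> [u a] [v b] e; have := congr1 block e; rewrite !block_vertexK /= => uv.
subst v; congr pair; apply: val_inj.
by move/(congr1 val): e => /= /eqP; rewrite eqn_add2l => /eqP.
Qed.

Lemma block_vertex_in q : block_vertex q \in block_support.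
Proof. by rewrite inE block_vertex_lt. Qed.

Lemma card_block_fibre u : #|[set i in block_support | block i == u]| <= t.
Proof.
apply: leq_trans (_ : #|[set block_vertex (u, a) | a : 'I_t]| <= t).
  apply: subset_leq_card; apply/subsetP => i; rewrite !inE => /andP[i_lt /eqP <-].
  have t_pos : 0 < t by case: t i_lt => //; rewrite muln0.
  apply/imsetP; exists (Ordinal (ltn_pmod i t_pos)) => //; apply: val_inj => /=.
  by rewrite inordK ?ltn_divLR // -divn_eq.
by apply: leq_trans (leq_imset_card _ _) _; rewrite card_ord.
Qed.

End Blocks.

Lemma exstar_ge_blowup (V : finType) (EH : {set {set V}}) n k t s :
  simple_graph EH -> connected_graph EH -> bipartite_graph EH -> 2 < #|V| ->
  #|V| <= s -> t = 1 \/ 2 * #|V| * t <= s -> k.+1 * t <= n ->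
  ex k.+1 EH * (t * t) <= exstar n EH s.
Proof.
move=> simH connH bipH V_gt2 Vs t_cases kt_le_n.
pose P (E : {set {set 'I_k.+1}}) := simple_graph E && ~~ has_copy EH E.
have [|G /andP[simG G_free] exG] := @eq_bigmax_cond _ P (fun E => #|E|).
  apply/card_gt0P; exists set0; rewrite unfold_in /P set0_free ?andbT 1?ltnW //.
  by apply/forall_inP => e; rewrite inE.
have -> : ex k.+1 EH = #|G| := exG.
apply: leq_trans (_ : #|blowup G (block_support n k t) (@block n k t)| <= _).
  exact: blowup_card simG (block_vertex_inj (kt_le_n := kt_le_n))
    (block_vertex_in kt_le_n) (block_vertexK kt_le_n).
apply: leq_bigmax_cond; rewrite blowup_simple blowup_induced_free //.
by rewrite (blowup_Kss_free bipH G_free Vs (card_block_fibre kt_le_n)).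
Qed.

Lemma blowup_parameters h s n : 2 <= h -> h <= s -> s <= n ->
  exists t m, [/\ 0 < t, t = 1 \/ 2 * h * t <= s, s <= 4 * h * t,
                  2 <= m & m * t <= n <= 2 * t * m].
Proof.
move=> h_ge2 hs sn; set q := s %/ (2 * h); pose t := maxn 1 q.
have q_le : q * (2 * h) <= s := leq_divM s (2 * h).
have q_gt : s < q.+1 * (2 * h) by apply: ltn_ceil; lia.
have t_pos : 0 < t by rewrite leq_max.
have t_cases : t = 1 \/ 2 * h * t <= s.
  by rewrite /t; case: (leqP q 1) => q1; [left; lia | right; nia].
have s_le : s <= 4 * h * t.
  by rewrite /t; case: (leqP q 1) => q1; nia.
have t_le : 2 * t <= n.
  by rewrite /t; case: (leqP q 1) => q1; nia.
have n_lt := ltn_ceil n t_pos.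
have m_ge2 : 2 <= n %/ t by rewrite leq_divRL.
by exists t, (n %/ t); rewrite leq_divM; split=> //=; nia.
Qed.

Section RealBounds.
Local Open Scope R_scope.

Lemma Rpower_gt0 x y : 0 < Rpower x y.
Proof. exact: exp_pos. Qed.

Lemma Rpower_two x : 0 < x -> Rpower x 2 = x * x.
Proof.
move=> x_pos; have -> : 2 = INR 2 by rewrite /=; lra.
by rewrite Rpower_pow //= Rmult_1_r.
Qed.

Lemma Rpower_le_scaled x a y e k : 0 < x -> 1 <= a -> 0 < y -> x <= a * y ->
  0 <= e <= k -> Rpower x e <= Rpower a k * Rpower y e.
Proof.
move=> x_pos a_ge1 y_pos x_le [e_ge0 e_le].
apply: Rle_trans (_ : Rpower (a * y) e <= _); first by apply: Rle_Rpower_l; lra.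
rewrite -Rpower_mult_distr; try lra.
apply: Rmult_le_compat_r; first exact/Rlt_le/Rpower_gt0.
exact: Rle_Rpower.
Qed.

Lemma Rpower_blowup_bound al h s n t m : 0 <= al <= 1 -> 1 <= h -> 1 <= t -> 0 < m ->
  0 < s -> 0 < n -> s <= 4 * h * t -> n <= 2 * t * m ->
  Rpower s (1 - al) * Rpower n (1 + al) <= 16 * h * (t * t) * Rpower m (1 + al).
Proof.
move=> al01 h_ge1 t_ge1 m_pos s_pos n_pos s_le n_le.
have s_pow : Rpower s (1 - al) <= 4 * h * Rpower t (1 - al).
  rewrite -[X in X * Rpower t _](Rpower_1 (4 * h)); last lra.
  by apply: Rpower_le_scaled; lra.
have n_pow : Rpower n (1 + al) <= 4 * (Rpower t (1 + al) * Rpower m (1 + al)).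
  have -> : 4 = Rpower 2 2 by rewrite Rpower_two; lra.
  rewrite Rpower_mult_distr; try lra.
  by apply: Rpower_le_scaled; nra.
have t_pow : Rpower t (1 - al) * Rpower t (1 + al) = t * t.
  by rewrite -Rpower_plus -Rpower_two; [congr Rpower; ring | lra].
have := Rpower_gt0 t (1 - al); have := Rpower_gt0 t (1 + al).
have := Rpower_gt0 m (1 + al); have := Rpower_gt0 s (1 - al).
have := Rpower_gt0 n (1 + al); rewrite -t_pow.
move=> *; apply: Rle_trans (Rmult_le_compat _ _ _ _ _ _ s_pow n_pow) _; nra.
Qed.

Lemma lower_bound_everywhere (u : nat -> R) (c beta : R) (N : nat) :
  0 < c -> beta <= 2 ->
  (forall n, (N <= n)%nat -> c * Rpower (INR n) beta <= u n) ->
  (forall n, (2 <= n)%nat -> 1 <= u n) ->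
  exists2 c', 0 < c' & forall n, (2 <= n)%nat -> c' * Rpower (INR n) beta <= u n.
Proof.
move=> c_pos beta_le2 u_large u_ge1; set K := INR N * INR N + 1.
have K_pos : 0 < K by have := pos_INR N; rewrite /K; nra.
exists (Rmin c (/ K)) => [|n n_ge2]; first exact/Rmin_glb_lt/Rinv_0_lt_compat.
have pow_pos := Rpower_gt0 (INR n) beta.
have [Nn | nN] := leqP N n.
  apply: Rle_trans (u_large n Nn); apply: Rmult_le_compat_r; [lra | exact: Rmin_l].
have pow_le : Rpower (INR n) beta <= K.
  have n_ge1 : 1 <= INR n by apply: (le_INR 1); apply/leP; lia.
  have n_le : INR n <= INR N by apply/le_INR/leP; lia.
  apply: Rle_trans (_ : Rpower (INR n) 2 <= _); first exact: Rle_Rpower.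
  by rewrite Rpower_two /K; nra.
apply: Rle_trans (u_ge1 n n_ge2); rewrite -(Rinv_l K); last lra.
by apply: Rmult_le_compat; [exact/Rlt_le/Rmin_glb_lt/Rinv_0_lt_compat | lra | exact: Rmin_r |].
Qed.

Lemma exstar_lower_bound (V : finType) (EH : {set {set V}}) (alpha c : R) n s :
  simple_graph EH -> connected_graph EH -> bipartite_graph EH -> (2 < #|V|)%nat ->
  0 < alpha < 1 -> 0 <= c ->
  (forall m, (2 <= m)%nat -> c * Rpower (INR m) (1 + alpha) <= INR (ex m EH)) ->
  (#|V| <= s)%nat -> (s <= n)%nat ->
  c / (16 * INR #|V|) * Rpower (INR s) (1 - alpha) * Rpower (INR n) (1 + alpha)
    <= INR (exstar n EH s).
Proof.
move=> simH connH bipH V_gt2 alpha01 c_ge0 ex_ge Vs sn.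
have [t [[|k] [t_pos t_cases s_le m_ge2 /andP[mt_le n_le]]]] :=
  blowup_parameters (ltnW V_gt2) Vs sn; first by [].
have comb := exstar_ge_blowup simH connH bipH V_gt2 Vs t_cases mt_le.
have INR_ge1 (x : nat) : (0 < x)%nat -> 1 <= INR x.
  by move=> ?; apply: (le_INR 1); apply/leP.
have h_ge1 := INR_ge1 #|V| (ltnW (ltnW V_gt2)).
have s_pos : 0 < INR s by apply: lt_0_INR; apply/ltP; lia.
have n_pos : 0 < INR n by apply: lt_0_INR; apply/ltP; lia.
have s_leR : INR s <= 4 * INR #|V| * INR t.
  by have := le_INR _ _ (elimT leP s_le); rewrite !mult_INR /=; lra.
have n_leR : INR n <= 2 * INR t * INR k.+1.
  by have := le_INR _ _ (elimT leP n_le); rewrite !mult_INR /=; lra.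
have pow_le := Rpower_blowup_bound (al := alpha) (ltac:(lra)) h_ge1 (INR_ge1 t t_pos)
  (lt_0_INR _ (ltP (ltn0Sn k))) s_pos n_pos s_leR n_leR.
have ex_k := ex_ge k.+1 m_ge2.
apply: Rle_trans (le_INR _ _ (elimT leP comb)); rewrite !mult_INR.
move: h_ge1 pow_le ex_k; set h := INR #|V|; set P := Rpower (INR k.+1) (1 + alpha).
move=> h_ge1 pow_le ex_k; have ch_ge0 : 0 <= c / (16 * h).
  by apply: Rmult_le_pos => //; apply/Rlt_le/Rinv_0_lt_compat; lra.
apply: Rle_trans (_ : c / (16 * h) * (16 * h * (INR t * INR t) * P) <= _).
  by rewrite Rmult_assoc; apply: Rmult_le_compat_l.
have -> : c / (16 * h) * (16 * h * (INR t * INR t) * P) = INR t * INR t * (c * P).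
  by field; lra.
rewrite [INR (ex _ _) * _]Rmult_comm; apply: Rmult_le_compat_l => //.
by have := pos_INR t; nra.
Qed.

End RealBounds.

Theorem proposition1p4 (V : finType) (EH : {set {set V}}) (alpha : R) :
  simple_graph EH -> connected_graph EH -> bipartite_graph EH ->
  (0 < alpha < 1)%R ->
  (exists c : R, (0 < c)%R /\ exists N : nat, forall n : nat, (N <= n)%N ->
     (c * Rpower (INR n) (1 + alpha) <= INR (ex n EH))%R) ->
  exists c : R, (0 < c)%R /\
    forall n s : nat, (#|V| <= s)%N -> (s <= n)%N ->
      (c * Rpower (INR s) (1 - alpha) * Rpower (INR n) (1 + alpha)
         <= INR (exstar n EH s))%R.
Proof.
move=> simH connH bipH alpha01 [c [c_pos [N ex_large]]].
have V_gt2 : 2 < #|V|.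
  rewrite ltnNge; apply/negP => V_le2.
  have := ex_large N (leqnn N); rewrite ex_small //=.
  by have := Rpower_gt0 (INR N) (1 + alpha); nra.
have ex_ge1 m : 2 <= m -> (1 <= INR (ex m EH))%R.
  by case: m => [|[|k]] // _; apply: (le_INR 1); apply/leP; apply: ex_gt0.
have [|c' c'_pos ex_ge] := lower_bound_everywhere c_pos _ ex_large ex_ge1; first lra.
exists (c' / (16 * INR #|V|))%R; split.
  apply: Rdiv_lt_0_compat => //.
  by have := lt_0_INR #|V| (ltP (ltnW (ltnW V_gt2))); lra.
by move=> n s; apply: exstar_lower_bound => //; lra.
Qed.
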